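(* Let $p,q\ge 0$ be integers, $n=p+q\ge 1$, and let $\mathcal{C}\ell(p,q)$ be the complex Clifford algebra with identity $e$ and generators $e^1,\dots,e^n$ satisfying $e^ae^b+e^be^a=2\eta^{ab}e$. For $U\in\mathcal{C}\ell(p,q)$ let $F(U)=e^aUe_a$ (summation over $a=1,\dots,n$, with $e_a=\eta_{ab}e^b$), $F^0(U)=U$, $F^{l+1}(U)=F(F^l(U))$, and let $\lambda_k=(-1)^k(n-2k)$, $k=0,\dots,n$. (i) If $n$ is even, then the $(n+1)\times(n+1)$ matrix $A=(a_{kl})_{k,l=0}^{n}$ with $a_{kl}=(\lambda_l)^k$ is invertible, and, writing $B=(b_{kl})_{k,l=0}^n=A^{-1}$, for every $U\in\mathcal{C}\ell(p,q)$ and every $k=0,\dots,n$, $$\pi_k(U)=\sum_{l=0}^n b_{kl}F^l(U).$$ (ii) If $n$ is odd, then the $\frac{n+1}{2}\times\frac{n+1}{2}$ matrix $D=(d_{kl})_{k,l=0}^{(n-1)/2}$ with $d_{kl}=(\lambda_l)^k$ is invertible, and, writing $G=(g_{kl})=D^{-1}$, for every $U\in\mathcal{C}\ell(p,q)$ and every $k=0,\dots,\frac{n-1}{2}$, $$\pi_k(U)+\pi_{n-k}(U)=\sum_{l=0}^{(n-1)/2} g_{kl}F^l(U).$$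
   Context: $\eta=(\eta^{ab})=(\eta_{ab})=\mathrm{diag}(1,\dots,1,-1,\dots,-1)$ with $p$ entries $1$ and $q$ entries $-1$. $\mathcal{C}\ell(p,q)$ is the associative unital complex algebra of dimension $2^n$ with basis $e$ and $e^{a_1\dots a_k}=e^{a_1}\cdots e^{a_k}$ for $1\le a_1<\dots<a_k\le n$, $k=1,\dots,n$. For $k=0,\dots,n$, $\mathcal{C}\ell_k(p,q)$ is the span of the basis elements $e^{a_1\dots a_k}$ with exactly $k$ indices ($\mathcal{C}\ell_0=\mathbb{C}e$), and $\pi_k:\mathcal{C}\ell(p,q)\to\mathcal{C}\ell_k(p,q)$ is the projection with respect to the direct sum decomposition $\mathcal{C}\ell(p,q)=\bigoplus_{k=0}^n\mathcal{C}\ell_k(p,q)$. *)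

From HB Require Import structures.
From mathcomp Require Import all_boot all_order all_algebra.
From mathcomp Require Import complex.
From mathcomp Require Import reals.
Set Implicit Arguments. Unset Strict Implicit. Unset Printing Implicit Defensive.
Import Order.TTheory GRing.Theory Num.Theory.
Local Open Scope ring_scope.
Local Open Scope complex_scope.

Notation CC R := (R[i]) (only parsing).

Section Clifford.
Variables (R : realType) (p q : nat).
Local Notation n := (p + q)%N.
Local Notation C := (R[i]).
Variable (A : algType C).
Variable (e : 'I_n -> A).

Definition eta_diag (a : 'I_n) : C := if (a < p)%N then 1 else -1.

(* eta^{ab} = eta_{ab} *)
Definition eta (a b : 'I_n) : C := if a == b then eta_diag a else 0.

Definition clifford_relations : Prop :=
  forall a b : 'I_n, e a * e b + e b * e a = (2 * eta a b) *: 1.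

(* basis element e^{a_1 ... a_k}, a_1 < ... < a_k (enum of a set of ordinals is increasing);
   blade set0 = e (the identity) *)
Definition blade (S : {set 'I_n}) : A := \prod_(a <- enum S) e a.

Definition blade_comb (c : {ffun {set 'I_n} -> C}) : A :=
  \sum_(S : {set 'I_n}) c S *: blade S.

(* the blades form a basis of A (so A has dimension 2^n): A is Cl(p,q) *)
Definition clifford_basis : Prop :=
  (forall U : A, exists c, U = blade_comb c) /\
  (forall c, blade_comb c = 0 -> c = 0).

(* pi_k(U) where U has coordinates c in the blade basis *)
Definition grade_proj (k : nat) (c : {ffun {set 'I_n} -> C}) : A :=
  \sum_(S : {set 'I_n} | #|S| == k) c S *: blade S.

(* F(U) = e^a U e_a with e_a = eta_{ab} e^b = eta_{aa} e^a *)
Definition cliffF (U : A) : A := \sum_(a < n) eta_diag a *: (e a * U * e a).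

Definition cliffF_iter (l : nat) (U : A) : A := iter l cliffF U.

End Clifford.

Definition lam (R : realType) (n k : nat) : R[i] := (-1) ^+ k * (n%:R - 2 * k%:R).

From Pilot Require Import Defs.
From HB Require Import structures.
From mathcomp Require Import all_boot all_order all_algebra.
From mathcomp Require Import complex.
From mathcomp Require Import reals.
From mathcomp Require Import zify ring.
Set Implicit Arguments. Unset Strict Implicit. Unset Printing Implicit Defensive.
Import Order.TTheory GRing.Theory Num.Theory.
Local Open Scope ring_scope.

(* Every blade e^S is an eigenvector of F: conjugating e^S by a generator e^a gives
   eta_aa (-1)^(|S| + [a in S]) e^S, and summing the signs over a gives the
   eigenvalue lambda_|S|.  Hence F^l(U) has coordinates lambda_|S|^l c_S, and the
   rows of the inverse of the Vandermonde matrix in the distinct eigenvalues pick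
   out the eigenspaces, i.e. the grades.  For n odd, lambda_k = lambda_(n-k), so
   only the sums pi_k + pi_(n-k) can be recovered. *)

Lemma sum_sign_mem (R : comPzRingType) n (S : {set 'I_n}) :
  \sum_(a < n) ((-1) ^+ (a \in S) : R) = n%:R - 2 * #|S|%:R.
Proof.
rewrite (bigID (mem S)) /= (eq_bigr (fun _ => -1)); last by move=> a ->.
rewrite (eq_bigr (fun _ => 1) (P := fun a => a \notin S)); last by move=> a /negbTE ->.
have -> : (n%:R : R) = #|S|%:R + #|[predC S]|%:R by rewrite -natrD cardC card_ord.
by rewrite !sumr_const -mulr_natr; ring.
Qed.

Lemma unitmx_vandermonde (F : fieldType) N (x : 'I_N -> F) :
  injective x -> (\matrix_(k < N, l < N) x l ^+ k) \in unitmx.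
Proof.
move=> x_inj.
have -> : \matrix_(k < N, l < N) x l ^+ k = Vandermonde N (\row_l x l).
  by apply/matrixP => i j; rewrite !mxE.
rewrite unitmxE det_Vandermonde unitfE; apply/prodf_neq0 => i _.
apply/prodf_neq0 => j lt_ij; rewrite !mxE subr_eq0.
by apply: contraTneq lt_ij => /x_inj ->; rewrite ltnn.
Qed.

Lemma leq_card_ord n (S : {pred 'I_n}) : (#|S| <= n)%N.
Proof. by rewrite -[X in (_ <= X)%N]card_ord max_card. Qed.

(* [lam] computed in [int], where [lia] can compare eigenvalues. *)
Definition lamZ (n k : nat) : int := (-1) ^+ k * (n%:Z - 2 * k%:Z).

Lemma lamE (R : realType) n k : lam R n k = (lamZ n k)%:~R.
Proof. by rewrite /lam /lamZ rmorphM rmorphXn rmorphN rmorph1 rmorphB rmorphM. Qed.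

Lemma sign_int k : (-1) ^+ k = (if odd k then -1 else 1 : int).
Proof. by rewrite -signr_odd; case: (odd k). Qed.

Lemma lamZ_inj_even n k j : ~~ odd n -> (k <= n)%N -> (j <= n)%N ->
  lamZ n k = lamZ n j -> k = j.
Proof. by rewrite /lamZ !sign_int; case: (odd k) / idP; case: (odd j) / idP; lia. Qed.

Lemma lamZ_inj_half n k j : (k <= n./2)%N -> (j <= n./2)%N ->
  lamZ n k = lamZ n j -> k = j.
Proof. by rewrite /lamZ !sign_int; case: (odd k) / idP; case: (odd j) / idP; lia. Qed.

Lemma lamZ_sym n k : odd n -> (k <= n)%N -> lamZ n (n - k) = lamZ n k.
Proof.
rewrite /lamZ !sign_int => odd_n le_kn.
by rewrite oddB // odd_n addTb; case: (odd k) => /=; lia.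
Qed.

Lemma lam_ord_inj (R : realType) n N :
  (forall k j, (k < N)%N -> (j < N)%N -> lamZ n k = lamZ n j -> k = j) ->
  injective (fun l : 'I_N => lam R n l).
Proof.
move=> lamZ_inj k j; rewrite !lamE => /eqP; rewrite eqr_int => /eqP.
by move/lamZ_inj => /(_ (ltn_ord k) (ltn_ord j)) /val_inj.
Qed.

Lemma minn_sub_leq_half n m : (minn m (n - m) <= n./2)%N.
Proof. by have := odd_double_half n; case: (odd n) / idP; lia. Qed.

Lemma minn_sub_eq_half n m k : odd n -> (m <= n)%N -> (k <= n./2)%N ->
  (minn m (n - m) == k) = (m == k) || (m == n - k)%N.
Proof. by move=> odd_n; have := odd_double_half n; rewrite odd_n; lia. Qed.

Section CliffordConjugation.
Variables (R : realType) (p q : nat) (A : algType R[i]) (e : 'I_(p + q) -> A).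
Hypothesis cliff : clifford_relations e.

Lemma eta_diag_sqr (a : 'I_(p + q)) : eta_diag R a * eta_diag R a = 1.
Proof. by rewrite /eta_diag; case: ifP; rewrite ?mulr1 ?mulrNN ?mulr1. Qed.

Lemma clifford_sqr (a : 'I_(p + q)) : e a * e a = eta_diag R a *: 1.
Proof.
have := cliff a a; rewrite /Defs.eta eqxx => eaa.
apply: (@scalerI _ _ 2); first by rewrite pnatr_eq0.
by rewrite scalerA -eaa scaler_nat mulr2n.
Qed.

Lemma clifford_anticomm (a b : 'I_(p + q)) : a != b -> e a * e b = - (e b * e a).
Proof.
move=> neq_ab; have := cliff a b; rewrite /Defs.eta (negbTE neq_ab) mulr0 scale0r.
by move/eqP; rewrite addr_eq0 => /eqP.
Qed.

Lemma prod_gen_mulr (a : 'I_(p + q)) (s : seq 'I_(p + q)) : a \notin s ->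
  (\prod_(x <- s) e x) * e a = (-1) ^+ size s *: (e a * \prod_(x <- s) e x).
Proof.
elim: s => [|x s IHs] /=; first by rewrite big_nil mulr1 mul1r expr0 scale1r.
rewrite in_cons negb_or => /andP[neq_ax a_notin_s].
rewrite big_cons -mulrA IHs // -scalerAr [e x * (e a * _)]mulrA.
rewrite [e x * e a]clifford_anticomm 1?eq_sym //.
by rewrite exprS mulN1r scaleNr mulNr scalerN mulrA.
Qed.

Lemma conj_prod_gen (a : 'I_(p + q)) (s : seq 'I_(p + q)) : uniq s ->
  e a * (\prod_(x <- s) e x) * e a
    = ((-1) ^+ (size s + (a \in s)) * eta_diag R a) *: \prod_(x <- s) e x.
Proof.
elim: s => [|x s IHs] /=; first by rewrite big_nil mulr1 clifford_sqr expr0 mul1r.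
move=> /andP[x_notin_s uniq_s]; rewrite big_cons in_cons.
have [->|neq_ax] := eqVneq a x.
  rewrite /= mulrA clifford_sqr -scalerAl mul1r -scalerAl prod_gen_mulr // scalerA.
  by rewrite addn1 !exprS !mulN1r opprK mulrC.
rewrite /= mulrA clifford_anticomm // !mulNr -!mulrA (mulrA (e a)) IHs // -scalerAr.
by rewrite addSn exprS mulN1r mulNr scaleNr.
Qed.

Lemma cliffF_blade (S : {set 'I_(p + q)}) :
  cliffF e (blade e S) = lam R (p + q) #|S| *: blade e S.
Proof.
rewrite /cliffF /blade.
under [X in X = _]eq_bigr => a _.
  rewrite conj_prod_gen ?enum_uniq // mem_enum -cardE scalerA mulrCA eta_diag_sqr mulr1.
  over.
rewrite -scaler_suml /lam; congr (_ *: _).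
by rewrite -sum_sign_mem mulr_sumr; apply: eq_bigr => a _; rewrite exprD.
Qed.

Lemma cliffF_sum_blade (d : {set 'I_(p + q)} -> R[i]) :
  cliffF e (\sum_(S : {set 'I_(p + q)}) d S *: blade e S)
    = \sum_(S : {set 'I_(p + q)}) d S *: cliffF e (blade e S).
Proof.
rewrite /cliffF.
under eq_bigr do rewrite mulr_sumr mulr_suml scaler_sumr.
rewrite exchange_big /=; apply: eq_bigr => S _.
rewrite scaler_sumr; apply: eq_bigr => a _.
by rewrite -scalerAr -scalerAl !scalerA mulrC.
Qed.

Lemma cliffF_iter_blade_comb (c : {ffun {set 'I_(p + q)} -> R[i]}) l :
  cliffF_iter e l (blade_comb e c)
    = \sum_(S : {set 'I_(p + q)}) (lam R (p + q) #|S| ^+ l * c S) *: blade e S.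
Proof.
rewrite /cliffF_iter; elim: l => [|l IHl].
  by rewrite /= /blade_comb; apply: eq_bigr => S _; rewrite expr0 mul1r.
rewrite iterS IHl cliffF_sum_blade; apply: eq_bigr => S _.
by rewrite cliffF_blade scalerA exprS mulrC mulrA.
Qed.

Lemma vandermonde_inv_cliffF_iter N (x : 'I_N -> R[i])
    (V := \matrix_(k < N, l < N) x l ^+ k) (g : {set 'I_(p + q)} -> 'I_N) :
  V \in unitmx -> (forall S : {set 'I_(p + q)}, lam R (p + q) #|S| = x (g S)) ->
  forall c (k : 'I_N), \sum_(l < N) invmx V k l *: cliffF_iter e l (blade_comb e c)
               = \sum_(S : {set 'I_(p + q)} | g S == k) c S *: blade e S.
Proof.
move=> V_unit lam_g c k; rewrite [RHS]big_mkcond.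
under [LHS]eq_bigr do rewrite cliffF_iter_blade_comb scaler_sumr.
rewrite exchange_big; apply: eq_bigr => S _.
under eq_bigr do rewrite scalerA mulrA.
rewrite -scaler_suml -big_distrl lam_g /=.
have -> : \sum_(l < N) invmx V k l * x (g S) ^+ l = (invmx V *m V) k (g S).
  by rewrite mxE; apply: eq_bigr => l _; rewrite mxE.
by rewrite mulVmx // mxE eq_sym; case: eqP; rewrite ?mul1r ?scale1r ?mul0r ?scale0r.
Qed.

Lemma grade_proj_add_complement (c : {ffun {set 'I_(p + q)} -> R[i]}) k :
  odd (p + q) -> (k <= (p + q)./2)%N ->
  grade_proj e k c + grade_proj e (p + q - k) c
    = \sum_(S : {set 'I_(p + q)} | minn #|S| (p + q - #|S|) == k) c S *: blade e S.
Proof.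
move=> odd_n le_k; rewrite /grade_proj [X in X + _]big_mkcond [X in _ + X]big_mkcond -big_split.
rewrite [RHS]big_mkcond /=.
have neq_k : k != (p + q - k)%N.
  by apply/eqP; have := odd_double_half (p + q); rewrite odd_n; lia.
apply: eq_bigr => S _; rewrite minn_sub_eq_half //; last exact: leq_card_ord.
have [-> | _] /= := eqVneq #|S| k; first by rewrite (negbTE neq_k) addr0.
by rewrite add0r.
Qed.

End CliffordConjugation.

Theorem theorem4 (R : realType) (p q : nat) (A : algType R[i])
    (e : 'I_(p + q) -> A) :
  (1 <= p + q)%N ->
  clifford_relations e -> clifford_basis e ->
  (~~ odd (p + q) ->
     let Am := \matrix_(k < (p + q).+1, l < (p + q).+1) lam R (p + q) l ^+ k in
     Am \in unitmx /\
     forall (U : A) (c : {ffun {set 'I_(p + q)} -> R[i]}), U = blade_comb e c ->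
     forall k : 'I_(p + q).+1,
       grade_proj e k c = \sum_(l < (p + q).+1) invmx Am k l *: cliffF_iter e l U) /\
  (odd (p + q) ->
     let Dm := \matrix_(k < (p + q)./2.+1, l < (p + q)./2.+1) lam R (p + q) l ^+ k in
     Dm \in unitmx /\
     forall (U : A) (c : {ffun {set 'I_(p + q)} -> R[i]}), U = blade_comb e c ->
     forall k : 'I_(p + q)./2.+1,
       grade_proj e k c + grade_proj e (p + q - k) c
         = \sum_(l < (p + q)./2.+1) invmx Dm k l *: cliffF_iter e l U).
Proof.
move=> _ cliff _; set n := (p + q)%N.
split=> [even_n Am | odd_n Dm].
  have Am_unit : Am \in unitmx.
    by apply/unitmx_vandermonde/lam_ord_inj => k j; rewrite !ltnS; apply: lamZ_inj_even.
  have lam_card (S : {set 'I_n}) : lam R n #|S| = lam R n (inord #|S| : 'I_n.+1).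
    by rewrite inordK //; exact: leq_card_ord.
  split=> // U c -> k; rewrite (vandermonde_inv_cliffF_iter cliff Am_unit lam_card).
  by apply: eq_bigl => S; rewrite -val_eqE /= inordK //; exact: leq_card_ord.
have Dm_unit : Dm \in unitmx.
  by apply/unitmx_vandermonde/lam_ord_inj => k j; rewrite !ltnS; apply: lamZ_inj_half.
have lam_fold (S : {set 'I_n}) :
    lam R n #|S| = lam R n (inord (minn #|S| (n - #|S|)) : 'I_n./2.+1).
  rewrite inordK; last exact: minn_sub_leq_half.
  by case: leqP => // _; rewrite !lamE lamZ_sym //; exact: leq_card_ord.
split=> // U c -> k; rewrite (vandermonde_inv_cliffF_iter cliff Dm_unit lam_fold).
rewrite grade_proj_add_complement //; last exact: ltn_ord k.
by apply: eq_bigl => S; rewrite -val_eqE /= inordK //; exact: minn_sub_leq_half.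
Qed.
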